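(* Let $m\ge1$, $y\in\mathbb{R}^{2m+1}_+$ with $c:=\sqrt{\sum_{i=0}^{2m}y_i}>0$, and let $(x^t)_{t\ge0}$ be generated by $x^{t+1}=I(x^t)$, where $$I(x)_j=x_j\,\frac1c\sum_{\ell=0}^m\frac{x_\ell\,y_{\ell+j}}{(x*x)_{\ell+j}},\qquad j=0,\dots,m,$$ from an initial $x^0\in\mathbb{R}^{m+1}_+$. If $x^\infty$ is a limit point of the sequence $(x^t)$, then $x^\infty=I(x^\infty)$.
   Context: For $x\in\mathbb{R}^{m+1}$ set $x_k=0$ for $k<0$, $k>m$, and $(x*x)_i=\sum_{j=0}^i x_{i-j}x_j$ for $i=0,\dots,2m$. The iteration is assumed well-defined (denominators positive, e.g. $x^0>0$). *)

From mathcomp Require Import all_boot all_order all_algebra.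
From mathcomp Require Import reals.
Set Implicit Arguments. Unset Strict Implicit. Unset Printing Implicit Defensive.
Import Order.TTheory GRing.Theory Num.Theory.
Local Open Scope ring_scope.

Definition ext (R : realType) (n : nat) (x : 'I_n -> R) (k : nat) : R :=
  match insub k with Some i => x i | None => 0 end.

Definition conv (R : realType) (m : nat) (x : 'I_m.+1 -> R) (i : nat) : R :=
  \sum_(j < i.+1) ext x (i - j) * ext x j.

Definition cst (R : realType) (m : nat) (y : 'I_(2 * m).+1 -> R) : R :=
  Num.sqrt (\sum_(i < (2 * m).+1) y i).

Definition Imap (R : realType) (m : nat) (y : 'I_(2 * m).+1 -> R)
    (x : 'I_m.+1 -> R) (j : 'I_m.+1) : R :=
  x j * (1 / cst y) *
    \sum_(l < m.+1) x l * ext y (l + j) / conv x (l + j).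

Definition limit_point (R : realType) (m : nat) (xs : nat -> 'I_m.+1 -> R)
    (xinf : 'I_m.+1 -> R) : Prop :=
  forall eps : R, 0 < eps -> forall N : nat,
    exists t : nat, (N <= t)%N /\ forall i, `|xs t i - xinf i| < eps.

(* The potential F(x) = sum_k y_k ln (x*x)_k does not decrease along the
   iteration.  Write I(x)_j = x_j g_j(x).  Since (I(x)*I(x))_k is the sum of
   x_l x_j g_l g_j over l + j = k, concavity of ln on each antidiagonal gives
   F(I(x)) - F(x) >= 2c sum_j I(x)_j ln g_j(x).  After one step sum_j x_j = c =
   sum_j I(x)_j, and with s = sqrt g the bound ln s >= 1 - 1/s turns the right
   hand side into at least (I(x)_j - x_j)^2 / 2.  As F <= sum_k y_k ln c^2 on
   the orbit, a limit point where I(x)_j <> x_j would, by continuity of I,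
   force infinitely many increments of F bounded away from 0. *)

From mathcomp Require Import all_boot all_order all_algebra.
From mathcomp Require Import boolp classical_sets reals topology normedtype exp.
From mathcomp Require Import ring lra zify.
(* Imported last: [topology] has its own [limit_point]. *)
Import Order.TTheory GRing.Theory Num.Theory.
Set Implicit Arguments. Unset Strict Implicit. Unset Printing Implicit Defensive.
Import numFieldNormedType.Exports.
Local Open Scope classical_set_scope.
Local Open Scope ring_scope.

Section RealInequalities.
Variable R : realType.

Lemma ln_le_subr1 (u : R) : 0 < u -> ln u <= u - 1.
Proof. by move=> u0; have := @le_ln1Dx R (u - 1); rewrite [1 + _]addrC subrK; apply; lra. Qed.

Lemma ln_le_tangent (u c : R) : 0 < u -> 0 < c -> ln u <= ln c - 1 + u / c.
Proof.
move=> u0 c0; have := ln_le_subr1 (divr_gt0 u0 c0).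
by rewrite ln_div ?posrE //; lra.
Qed.

Lemma sum_ln_le (I : finType) (P : pred I) (p v : I -> R) (c : R) :
  0 < c -> (forall i, P i -> 0 <= p i) -> (forall i, P i -> 0 < p i -> 0 < v i) ->
  \sum_(i | P i) p i * ln (v i) <=
    (\sum_(i | P i) p i) * (ln c - 1) + (\sum_(i | P i) p i * v i) / c.
Proof.
move=> c0 p_ge0 v_gt0; rewrite !mulr_suml -big_split /=; apply: ler_sum => i Pi.
have [->|pi0] := eqVneq (p i) 0; first by rewrite !mul0r addr0.
have pi_gt0 : 0 < p i by rewrite lt_def pi0 p_ge0.
rewrite -mulrA -mulrDr ler_wpM2l ?p_ge0 //.
exact: ln_le_tangent (v_gt0 _ Pi pi_gt0) c0.
Qed.

Lemma sqr_ln_ge (s : R) : 0 <= s -> 2 * (s ^+ 2 - s) <= s ^+ 2 * ln (s ^+ 2).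
Proof.
rewrite le_eqVlt => /orP[/eqP <-|s0]; first by rewrite expr0n /= !mul0r subrr mulr0.
have := @ln_le_subr1 s^-1; rewrite invr_gt0 lnV ?posrE // lnXn // mulr2n => /(_ s0).
have ss : s * s^-1 = 1 by rewrite mulfV ?gt_eqF.
have : 0 <= s ^+ 2 by rewrite sqr_ge0.
nra.
Qed.

Lemma ler_term_sum n (v : 'I_n -> R) j : (forall i, 0 <= v i) -> v j <= \sum_i v i.
Proof. by move=> v_ge0; rewrite (bigD1 j) //= lerDl sumr_ge0. Qed.

(* With s = sqrt g: (a g - a)^2 = a (s - 1)^2 * a (s + 1)^2, the second factor
   is at most 4 sum a, and a (s - 1)^2 sums to at most sum a g ln g. *)
Lemma sqr_dev_le_entropy n (a g : 'I_n -> R) (j : 'I_n) :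
  (forall i, 0 <= a i) -> (forall i, 0 <= g i) -> \sum_i a i * g i = \sum_i a i ->
  (a j * g j - a j) ^+ 2 <= 4 * (\sum_i a i) * \sum_i a i * g i * ln (g i).
Proof.
move=> a_ge0 g_ge0 sum_ag.
pose s i := Num.sqrt (g i).
have gE i : g i = s i ^+ 2 by rewrite sqr_sqrtr.
have s_ge0 i : 0 <= s i by exact: sqrtr_ge0.
have dev_le : \sum_i a i * (s i - 1) ^+ 2 <= \sum_i a i * g i * ln (g i).
  have -> : \sum_i a i * (s i - 1) ^+ 2 =
      \sum_i a i * (2 * (s i ^+ 2 - s i)) - \sum_i (a i * g i - a i).
    by rewrite -sumrB; apply: eq_bigr => i _; rewrite gE; ring.
  rewrite sumrB sum_ag subrr subr0; apply: ler_sum => i _.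
  by rewrite -mulrA ler_wpM2l // gE sqr_ln_ge.
have dev_j : a j * (s j - 1) ^+ 2 <= \sum_i a i * (s i - 1) ^+ 2.
  by apply: ler_term_sum => i; rewrite mulr_ge0 ?sqr_ge0.
have ag_j : a j * g j <= \sum_i a i.
  by rewrite -sum_ag; apply: ler_term_sum => i; rewrite mulr_ge0.
have a_j : a j <= \sum_i a i by exact: ler_term_sum.
have plus_j : a j * (s j + 1) ^+ 2 <= 4 * \sum_i a i.
  have : a j * (s j + 1) ^+ 2 = 2 * (a j * g j + a j) - a j * (s j - 1) ^+ 2.
    by rewrite gE; ring.
  have : 0 <= a j * (s j - 1) ^+ 2 by rewrite mulr_ge0 ?sqr_ge0.
  lra.
have -> : (a j * g j - a j) ^+ 2 = a j * (s j - 1) ^+ 2 * (a j * (s j + 1) ^+ 2).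
  by rewrite gE; ring.
rewrite [4 * _ * _]mulrC; apply: ler_pM => //; try by rewrite mulr_ge0 ?sqr_ge0.
exact: le_trans dev_j dev_le.
Qed.

End RealInequalities.

Section Convolution.
Variable R : realType.

Lemma ext_ord n (x : 'I_n -> R) (i : 'I_n) : ext x i = x i.
Proof. by rewrite /ext valK. Qed.

Lemma ext_out n (x : 'I_n -> R) k : (n <= k)%N -> ext x k = 0.
Proof. by move=> nk; rewrite /ext insubN // -leqNgt. Qed.

Lemma ext_ge0 n (x : 'I_n -> R) k : (forall i, 0 <= x i) -> 0 <= ext x k.
Proof. by move=> x_ge0; rewrite /ext; case: insub. Qed.

Variables (m : nat) (x : 'I_m.+1 -> R).

Lemma sum_ext (N : nat) (F : nat -> R) : (m < N)%N ->
  \sum_(i < N) ext x i * F i = \sum_(i < m.+1) x i * F i.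
Proof.
move=> mN; transitivity (\sum_(i < m.+1) ext x i * F i).
  rewrite (big_ord_widen N (fun i => ext x i * F i) mN) [RHS]big_mkcond /=.
  by apply: eq_bigr => i _; case: ltnP => // mi; rewrite ext_out ?mul0r.
by apply: eq_bigr => i _; rewrite ext_ord.
Qed.

Lemma sum_antidiag_coord (j k : nat) :
  \sum_(l < m.+1 | (l + j == k)%N) x l = if (j <= k)%N then ext x (k - j) else 0.
Proof.
case: leqP => [jk|kj]; last by rewrite big_pred0 // => l; apply/eqP; lia.
case: (ltnP (k - j) m.+1) => [km|mk]; last first.
  by rewrite ext_out // big_pred0 // => l; apply/eqP; have := ltn_ord l; lia.
rewrite (big_pred1 (Ordinal km)) => [|l]; first by rewrite -(ext_ord x (Ordinal km)).
by apply/eqP/eqP => [lj|-> /=]; [apply: val_inj => /=; lia | lia].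
Qed.

Lemma conv_pairs k : conv x k = \sum_(l < m.+1) \sum_(j < m.+1 | (l + j == k)%N) x l * x j.
Proof.
under [RHS]eq_bigr do rewrite big_mkcond.
rewrite [RHS]exchange_big /=.
under [RHS]eq_bigr do rewrite -big_mkcond -mulr_suml sum_antidiag_coord mulrC.
rewrite -(sum_ext (fun j => if (j <= k)%N then ext x (k - j) else 0) (ltn_addl k (ltnSn m))).
rewrite /conv (big_ord_widen (k + m.+1) (fun j => ext x (k - j) * ext x j)); last lia.
rewrite big_mkcond /=; apply: eq_bigr => i _; rewrite ltnS mulrC.
by case: leqP; rewrite ?mulr0.
Qed.

Lemma sum_mul_antidiag (h : nat -> R) (G : 'I_m.+1 -> 'I_m.+1 -> R) :
  \sum_(k < (2 * m).+1) h k * \sum_(l < m.+1) \sum_(j < m.+1 | (l + j == k)%N) G l j =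
  \sum_(l < m.+1) \sum_(j < m.+1) h (l + j)%N * G l j.
Proof.
under eq_bigr do rewrite mulr_sumr.
rewrite exchange_big; apply: eq_bigr => l _.
under eq_bigr do rewrite mulr_sumr big_mkcond.
rewrite exchange_big; apply: eq_bigr => j _ /=; rewrite -big_mkcond /=.
have lj : (l + j < (2 * m).+1)%N by have := ltn_ord l; have := ltn_ord j; lia.
by rewrite (big_pred1 (Ordinal lj)) // => k; rewrite /= -val_eqE eq_sym.
Qed.

Lemma sum_mul_conv (h : nat -> R) :
  \sum_(k < (2 * m).+1) h k * conv x k =
  \sum_(l < m.+1) \sum_(j < m.+1) h (l + j)%N * (x l * x j).
Proof. by rewrite -sum_mul_antidiag; under eq_bigr do rewrite conv_pairs. Qed.

Hypothesis x_ge0 : forall i, 0 <= x i.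

Lemma conv_ge0 k : 0 <= conv x k.
Proof. by apply: sumr_ge0 => i _; rewrite mulr_ge0 ?ext_ge0. Qed.

Lemma conv_le_sqr_sum k : conv x k <= (\sum_i x i) ^+ 2.
Proof.
rewrite conv_pairs expr2 mulr_suml; apply: ler_sum => l _; rewrite mulr_sumr.
rewrite [leRHS](bigID (fun j : 'I_m.+1 => (l + j == k)%N)) /= lerDl.
by apply: sumr_ge0 => j _; rewrite mulr_ge0.
Qed.

End Convolution.

Section EMStep.
Variables (R : realType) (m : nat) (y : 'I_(2 * m).+1 -> R).
Hypotheses (y_ge0 : forall k, 0 <= y k) (cst_gt0 : 0 < cst y).

Definition gain (x : 'I_m.+1 -> R) (j : 'I_m.+1) : R :=
  1 / cst y * \sum_(l < m.+1) x l * ext y (l + j) / conv x (l + j).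

Definition potential (x : 'I_m.+1 -> R) : R :=
  \sum_(k < (2 * m).+1) y k * ln (conv x k).

Lemma Imap_gain x j : Imap y x j = x j * gain x j.
Proof. by rewrite /Imap /gain [RHS]mulrA. Qed.

Lemma sqr_cst : cst y ^+ 2 = \sum_k y k.
Proof. by rewrite sqr_sqrtr // sumr_ge0. Qed.

Variable x : 'I_m.+1 -> R.
Hypotheses (x_ge0 : forall i, 0 <= x i)
  (conv_gt0 : forall k, (k <= 2 * m)%N -> 0 < conv x k).

Let x_gt0 i : x i != 0 -> 0 < x i.
Proof. by move=> xi0; rewrite lt_def xi0 x_ge0. Qed.

Lemma gain_ge0 j : 0 <= gain x j.
Proof.
apply: mulr_ge0; first by rewrite div1r invr_ge0 ltW.
by apply: sumr_ge0 => l _; rewrite divr_ge0 ?mulr_ge0 ?ext_ge0 ?conv_ge0.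
Qed.

Lemma Imap_ge0 j : 0 <= Imap y x j.
Proof. by rewrite Imap_gain mulr_ge0 ?gain_ge0. Qed.

Lemma gain_gt0 (l j : 'I_m.+1) : 0 < x j -> 0 < ext y (j + l) -> 0 < gain x l.
Proof.
move=> xj_gt0 yjl_gt0; rewrite mulr_gt0 ?divr_gt0 // (bigD1 j) //=.
rewrite ltr_pwDl ?divr_gt0 ?mulr_gt0 ?conv_gt0 //.
  by have := ltn_ord l; have := ltn_ord j; lia.
by apply: sumr_ge0 => i _; rewrite divr_ge0 ?mulr_ge0 ?ext_ge0 ?conv_ge0.
Qed.

Definition weight (l j : 'I_m.+1) : R := ext y (l + j) / conv x (l + j) * (x l * x j).

Lemma weightC l j : weight l j = weight j l.
Proof. by rewrite /weight addnC mulrC [x l * _]mulrC mulrC. Qed.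

Lemma sum_weight l : \sum_j weight l j = cst y * Imap y x l.
Proof.
rewrite Imap_gain /gain; set S := \sum_(_ < _) (_ / _).
have -> : cst y * (x l * (1 / cst y * S)) = x l * S by field; rewrite gt_eqF.
by rewrite mulr_sumr; apply: eq_bigr => j _; rewrite /weight addnC; ring.
Qed.

Lemma sum_Imap : \sum_j Imap y x j = cst y.
Proof.
apply: (mulfI (lt0r_neq0 cst_gt0)); rewrite -expr2 sqr_cst mulr_sumr.
under eq_bigr do rewrite -sum_weight.
rewrite -(sum_mul_conv x (fun k => ext y k / conv x k)); apply: eq_bigr => k _.
by rewrite ext_ord divfK // gt_eqF // conv_gt0 // -ltnS.
Qed.

Lemma potential_le_sqr_cst : \sum_i x i = cst y -> potential x <= \sum_k y k * ln (cst y ^+ 2).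
Proof.
move=> sum_x; apply: ler_sum => k _; rewrite ler_wpM2l // ler_ln ?posrE ?exprn_gt0 //.
  by rewrite -sum_x conv_le_sqr_sum.
by rewrite conv_gt0 // -ltnS.
Qed.

Lemma conv_Imap k : conv (Imap y x) k =
  \sum_(l < m.+1) \sum_(j < m.+1 | (l + j == k)%N) x l * x j * (gain x l * gain x j).
Proof.
rewrite conv_pairs; apply: eq_bigr => l _; apply: eq_bigr => j _.
by rewrite !Imap_gain; ring.
Qed.

Lemma weight_lnM l j :
  weight l j * ln (gain x l * gain x j) = weight l j * (ln (gain x l) + ln (gain x j)).
Proof.
have [->|w0] := eqVneq (weight l j) 0; first by rewrite !mul0r.
move: w0; rewrite /weight !mulf_eq0 !negb_or => /andP[/andP[y0 _] /andP[xl0 xj0]].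
have y_gt0 : 0 < ext y (l + j) by rewrite lt_def y0 ext_ge0.
have y_gt0' : 0 < ext y (j + l) by rewrite addnC.
by rewrite lnM ?posrE ?(gain_gt0 (x_gt0 xj0) y_gt0') ?(gain_gt0 (x_gt0 xl0) y_gt0).
Qed.

Hypothesis convI_gt0 : forall k, (k <= 2 * m)%N -> 0 < conv (Imap y x) k.

Lemma potential_step (k : 'I_(2 * m).+1) :
  y k / conv x k *
    \sum_(l < m.+1) \sum_(j < m.+1 | (l + j == k)%N) x l * x j * ln (gain x l * gain x j)
  <= y k * (ln (conv (Imap y x) k) - ln (conv x k)).
Proof.
have k2m : (k <= 2 * m)%N by rewrite -ltnS.
have cx_gt0 := conv_gt0 k2m; have cI_gt0 := convI_gt0 k2m.
have := y_ge0 k; rewrite le_eqVlt => /orP[/eqP <-|yk_gt0]; first by rewrite !mul0r.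
set r := conv (Imap y x) k / conv x k.
have r_gt0 : 0 < r by rewrite divr_gt0.
have jensen : \sum_(l < m.+1) \sum_(j < m.+1 | (l + j == k)%N)
    x l * x j * ln (gain x l * gain x j) <= conv x k * ln r.
  rewrite pair_big_dep /=.
  apply: le_trans (sum_ln_le (P := fun p : 'I_m.+1 * 'I_m.+1 => (p.1 + p.2 == k)%N)
    (p := fun p => x p.1 * x p.2) (v := fun p => gain x p.1 * gain x p.2) r_gt0 _ _) _.
  - by move=> p _; rewrite mulr_ge0.
  - move=> [l j] /= /eqP ljk /lt0r_neq0; rewrite mulf_eq0 negb_or => /andP[xl0 xj0].
    have ylj : 0 < ext y (l + j)%N by rewrite ljk ext_ord.
    have yjl : 0 < ext y (j + l)%N by rewrite addnC.
    by rewrite mulr_gt0 ?(gain_gt0 (x_gt0 xj0) yjl) ?(gain_gt0 (x_gt0 xl0) ylj).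
  - have convE : conv x k = \sum_(p : 'I_m.+1 * 'I_m.+1 | (p.1 + p.2 == k)%N) x p.1 * x p.2.
      by rewrite conv_pairs pair_big_dep.
    have convIE : conv (Imap y x) k = \sum_(p : 'I_m.+1 * 'I_m.+1 | (p.1 + p.2 == k)%N)
        x p.1 * x p.2 * (gain x p.1 * gain x p.2).
      by rewrite conv_Imap pair_big_dep.
    rewrite -convE -convIE (_ : _ + _ = conv x k * ln r) //.
    by rewrite /r; field; rewrite !gt_eqF.
rewrite -ln_div ?posrE // -/r.
have -> : y k * ln r = y k / conv x k * (conv x k * ln r) by field; rewrite gt_eqF.
by rewrite ler_wpM2l // divr_ge0 // ltW.
Qed.

Lemma potential_Imap_ge :
  2 * cst y * \sum_j Imap y x j * ln (gain x j) <= potential (Imap y x) - potential x.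
Proof.
have -> : potential (Imap y x) - potential x =
    \sum_k y k * (ln (conv (Imap y x) k) - ln (conv x k)).
  by rewrite /potential -sumrB; apply: eq_bigr => k _; rewrite mulrBr.
suff -> : 2 * cst y * \sum_j Imap y x j * ln (gain x j) =
    \sum_k y k / conv x k * \sum_(l < m.+1) \sum_(j < m.+1 | (l + j == k)%N)
      x l * x j * ln (gain x l * gain x j).
  by apply: ler_sum => k _; exact: potential_step.
under [RHS]eq_bigr => k _ do rewrite -(ext_ord y k).
rewrite (sum_mul_antidiag (fun k => ext y k / conv x k)).
under [RHS]eq_bigr => l _ do
  under eq_bigr => j _ do rewrite mulrA -/(weight l j) weight_lnM mulrDr.
under [RHS]eq_bigr do rewrite big_split.
rewrite [RHS]big_split /= [X in _ = _ + X]exchange_big /=.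
under [X in _ = _ + X]eq_bigr => j _ do under eq_bigr => l _ do rewrite weightC.
suff -> : \sum_l \sum_j weight l j * ln (gain x l) =
    cst y * \sum_l Imap y x l * ln (gain x l) by ring.
by rewrite mulr_sumr; apply: eq_bigr => l _; rewrite -mulr_suml sum_weight mulrA.
Qed.

Lemma sqr_dev_le_potential j : \sum_i x i = cst y ->
  (Imap y x j - x j) ^+ 2 <= 2 * (potential (Imap y x) - potential x).
Proof.
move=> sum_x.
have sum_xgain : \sum_i x i * gain x i = \sum_i x i.
  by under eq_bigr do rewrite -Imap_gain; rewrite sum_Imap sum_x.
have := sqr_dev_le_entropy j x_ge0 gain_ge0 sum_xgain.
rewrite -Imap_gain sum_x => /le_trans; apply.
have := potential_Imap_ge; under eq_bigr do rewrite Imap_gain; lra.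
Qed.

End EMStep.

Section SupNeighbourhoods.
Variables (R : realType) (n : nat) (x0 : 'I_n -> R).

Definition sup_nbhs : set_system ('I_n -> R) :=
  filter_from [set eta | 0 < eta] (fun eta => [set x : 'I_n -> R | forall i, `|x i - x0 i| < eta]).

#[global] Instance sup_nbhs_filter : Filter sup_nbhs.
Proof.
apply: filter_from_filter; first by exists 1; rewrite /= ltr01.
move=> a b a_gt0 b_gt0; exists (Num.min a b); first by rewrite /= lt_min a_gt0 b_gt0.
by move=> x x_near; split=> i; have := x_near i; rewrite lt_min => /andP[].
Qed.

Lemma cvg_coord (i : 'I_n) : x i @[x --> sup_nbhs] --> x0 i.
Proof. by apply/cvgrPdist_lt => e e_gt0; exists e => // x /= /(_ i); rewrite distrC. Qed.

Lemma cvg_ext k : ext x k @[x --> sup_nbhs] --> ext x0 k.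
Proof. by rewrite /ext; case: insub => [i|]; [exact: cvg_coord | exact: cvg_cst]. Qed.

End SupNeighbourhoods.
Arguments sup_nbhs {R n}.

Lemma cvg_conv (R : realType) m (x0 : 'I_m.+1 -> R) k :
  conv x k @[x --> sup_nbhs x0] --> conv x0 k.
Proof.
apply: cvg_big => [|i _]; first exact: add_continuous.
by apply: cvgM; exact: cvg_ext.
Qed.

Lemma cvg_Imap (R : realType) m (y : 'I_(2 * m).+1 -> R) (x0 : 'I_m.+1 -> R) (j : 'I_m.+1) :
  (forall l : 'I_m.+1, conv x0 (l + j) != 0) ->
  Imap y x j @[x --> sup_nbhs x0] --> Imap y x0 j.
Proof.
move=> conv_neq0; apply: cvgM; first by apply: cvgM; [exact: cvg_coord | exact: cvg_cst].
apply: cvg_big => [|l _]; first exact: add_continuous.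
apply: cvgM; first by apply: cvgM; [exact: cvg_coord | exact: cvg_cst].
by apply: cvgV; [exact: conv_neq0 | exact: cvg_conv].
Qed.

Lemma limit_pointS (R : realType) n (xs : nat -> 'I_n.+1 -> R) xinf :
  limit_point xs xinf -> limit_point (fun t => xs t.+1) xinf.
Proof.
move=> xinf_lim eps eps_gt0 N; have [t [Nt close]] := xinf_lim eps eps_gt0 N.+1.
by case: t Nt close => // t Nt close; exists t.
Qed.

Lemma limit_point_increment_le0 (R : realType) n (xs : nat -> 'I_n.+1 -> R) xinf
    (Phi : nat -> R) (d : ('I_n.+1 -> R) -> R) (B : R) :
  (forall t, 0 <= d (xs t)) -> (forall t, d (xs t) <= Phi t.+1 - Phi t) ->
  (forall t, Phi t <= B) -> d x @[x --> sup_nbhs xinf] --> d xinf ->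
  limit_point xs xinf -> d xinf <= 0.
Proof.
move=> d_ge0 d_le Phi_le d_cvg xinf_lim; rewrite leNgt; apply/negP => d_gt0.
set delta := d xinf / 2.
have delta_gt0 : 0 < delta by rewrite divr_gt0.
have dE : d xinf = delta + delta by rewrite /delta -splitr.
have Phi_mono : {homo Phi : s t / (s <= t)%N >-> s <= t}.
  by apply: homo_leq => [//|t s u|t]; [exact: le_trans | have := d_ge0 t; have := d_le t; lra].
have [eta /= eta_gt0 d_near] : sup_nbhs xinf [set x | `|d xinf - d x| < delta].
  by move/cvgrPdist_lt : d_cvg; apply.
have grow K : exists t, Phi 0%N + K%:R * delta <= Phi t.
  elim: K => [|K [t IH]]; first by exists 0%N; rewrite mul0r addr0.
  have [s [ts /d_near /= close_s]] := xinf_lim eta eta_gt0 t.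
  exists s.+1; have := d_le s; have := Phi_mono _ _ ts.
  have : d xinf - d (xs s) <= `|d xinf - d (xs s)| by exact: ler_norm.
  rewrite -natr1 mulrDl mul1r; lra.
have v_ge0 : 0 <= (B - Phi 0%N) / delta by rewrite divr_ge0 ?subr_ge0 ?Phi_le // ltW.
have [t] := grow (Num.Def.archi_bound ((B - Phi 0%N) / delta)).
have := archi_boundP v_ge0; rewrite ltr_pdivrMr // => bound; have := Phi_le t; lra.
Qed.

Theorem lemma4 (R : realType) (m : nat) (y : 'I_(2 * m).+1 -> R)
    (xs : nat -> 'I_m.+1 -> R) (xinf : 'I_m.+1 -> R) :
  (1 <= m)%N ->
  (forall i, 0 <= y i) ->
  0 < cst y ->
  (forall j, 0 < xs 0%N j) ->
  (forall t (k : nat), (k <= 2 * m)%N -> 0 < conv (xs t) k) ->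
  (forall t j, xs t.+1 j = Imap y (xs t) j) ->
  limit_point xs xinf ->
  (forall (k : nat), (k <= 2 * m)%N -> 0 < conv xinf k) ->
  forall j, xinf j = Imap y xinf j.
Proof.
move=> _ y_ge0 cst_gt0 xs0_gt0 conv_gt0 xsS xinf_lim convinf_gt0 j.
have IxsE t : Imap y (xs t) = xs t.+1 by apply/funext => i; rewrite xsS.
have xs_ge0 t i : 0 <= xs t i.
  by elim: t i => [|t IH] i; [exact: ltW | rewrite xsS; exact: Imap_ge0].
have sum_xs t : \sum_i xs t.+1 i = cst y by rewrite -IxsE (sum_Imap y_ge0 cst_gt0 (conv_gt0 t)).
have : (Imap y xinf j - xinf j) ^+ 2 <= 0.
  apply: (@limit_point_increment_le0 _ _ (fun t => xs t.+1) _
    (fun t => 2 * potential y (xs t.+1)) (fun x => (Imap y x j - x j) ^+ 2)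
    (2 * \sum_k y k * ln (cst y ^+ 2))) => [t|t|t||]; last exact: limit_pointS.
  - exact: sqr_ge0.
  - rewrite /= -mulrBr -(IxsE t.+1).
    apply: (sqr_dev_le_potential y_ge0 cst_gt0 (xs_ge0 _) (conv_gt0 _) _ _ (sum_xs t)).
    by rewrite IxsE; exact: conv_gt0.
  - by rewrite ler_pM2l // (potential_le_sqr_cst y_ge0 cst_gt0 (xs_ge0 _) (conv_gt0 _)).
  - have Imap_cvg : Imap y x j @[x --> sup_nbhs xinf] --> Imap y xinf j.
      apply: cvg_Imap => l; rewrite gt_eqF // convinf_gt0 //.
      by have := ltn_ord l; have := ltn_ord j; lia.
    by apply: cvgM; apply: cvgB => //; exact: cvg_coord.
move=> dev_le0; apply/eqP; rewrite eq_sym -subr_eq0 -sqrf_eq0.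
by rewrite eq_le dev_le0 sqr_ge0.
Qed.
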